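(* Let $q$ be a prime power and $n\ge1$. For $i=1,2$, let $\mathcal{C}_i$ be a $[2n,n,d_i]_q$ linear code with generator matrix $G_i=(I_n\ \ f_i(A_i))$, where $f_i(x)\in\mathbb{F}_q[x]$ and $A_i$ is an $n\times n$ Toeplitz matrix over $\mathbb{F}_q$. Then there exists a $[4n,2n,\min\{d_1,d_2\}]_q$ linear code which is formally self-dual with respect to the Euclidean inner product and (when $q$ is an even power of a prime) with respect to the Hermitian inner product.
   Context: A Toeplitz matrix is a square matrix whose diagonals parallel to the main diagonal each have constant entries. Euclidean inner product $\sum_i x_iy_i$; for $q=p^h$ with $h$ even, Hermitian inner product $\sum_i x_iy_i^{\sqrt q}$. A code is formally self-dual (FSD) with respect to an inner product if it has the same weight distribution as its dual code with respect to that inner product. *)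

From HB Require Import structures.
From mathcomp Require Import all_boot all_order all_algebra all_field.
Set Implicit Arguments. Unset Strict Implicit. Unset Printing Implicit Defensive.
Import GRing.Theory.
Local Open Scope ring_scope.

Definition wt (F : finFieldType) (m : nat) (x : 'rV[F]_m) : nat :=
  #|[set j : 'I_m | x 0 j != 0]|.

Definition genCode (F : finFieldType) (k m : nat) (G : 'M[F]_(k, m))
  : {set 'rV[F]_m} := [set u *m G | u : 'rV[F]_k].

Definition minDist (F : finFieldType) (m : nat) (C : {set 'rV[F]_m}) (d : nat) :=
  (exists2 c, c \in C & (c != 0) /\ wt c = d) /\
  (forall c, c \in C -> c != 0 -> (d <= wt c)%N).

Definition ipE (F : finFieldType) (m : nat) (x y : 'rV[F]_m) : F :=
  \sum_(j < m) x 0 j * y 0 j.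

(* Hermitian inner product with exponent r = sqrt q *)
Definition ipH (F : finFieldType) (r : nat) (m : nat) (x y : 'rV[F]_m) : F :=
  \sum_(j < m) x 0 j * (y 0 j) ^+ r.

Definition dualCode (F : finFieldType) (m : nat) (ip : 'rV[F]_m -> 'rV[F]_m -> F)
  (C : {set 'rV[F]_m}) : {set 'rV[F]_m} :=
  [set y | [forall x in C, ip x y == 0]].

Definition sameWD (F : finFieldType) (m : nat) (C D : {set 'rV[F]_m}) :=
  forall w : nat, #|[set c in C | wt c == w]| = #|[set c in D | wt c == w]|.

Definition formallySelfDual (F : finFieldType) (m : nat)
  (ip : 'rV[F]_m -> 'rV[F]_m -> F) (C : {set 'rV[F]_m}) :=
  sameWD C (dualCode ip C).

Definition toeplitz (F : finFieldType) (n : nat) (A : 'M[F]_n) :=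
  forall i j i' j' : 'I_n, (i + j' = i' + j)%N -> A i j = A i' j'.

Definition polyMx (F : finFieldType) (n : nat) (f : {poly F}) (A : 'M[F]_n) : 'M[F]_n :=
  \sum_(i < size f) f`_i *: A ^+ i.

From HB Require Import structures.
From mathcomp Require Import all_boot all_order all_algebra all_field all_fingroup.
From mathcomp Require Import zify.
Set Implicit Arguments. Unset Strict Implicit. Unset Printing Implicit Defensive.
Import GRing.Theory.
Local Open Scope ring_scope.

(* Write M for the block-diagonal matrix diag(f1(A1), f2(A2)) and C for the code
   generated by (I | M).  Up to a permutation of coordinates C is the direct sum
   of C1 and C2, so it has dimension 2n and minimum distance min(d1, d2).
   A Toeplitz matrix A satisfies A^T = J A J for the exchange matrix J, hence so
   does every polynomial in A, and M^T = P M P with P = diag(J, J).  The Euclidean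
   dual of C is generated by (-M^T | I) = (-P M P | I), which is the image of C
   under the weight-preserving map (x1 | x2) |-> (-x2 P | x1 P).  When
   q = p^(2e), the Hermitian dual is the preimage of the Euclidean dual under the
   weight-preserving bijection a |-> a^(p^e) applied entrywise. *)

Section Weight.
Variable F : finFieldType.

Lemma wtE m (v : 'rV[F]_m) : wt v = (\sum_(j < m) (v ord0 j != 0)%R)%N.
Proof.
rewrite /wt -sum1_card big_mkcond /=; apply: eq_bigr => j _.
by rewrite inE; case: (v 0 j != 0).
Qed.

Lemma wt_row_mx m1 m2 (a : 'rV[F]_m1) (b : 'rV[F]_m2) :
  wt (row_mx a b) = (wt a + wt b)%N.
Proof.
by rewrite !wtE big_split_ord; congr (_ + _)%N; apply: eq_bigr => j _;
  rewrite ?row_mxEl ?row_mxEr.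
Qed.

Lemma wtN m (v : 'rV[F]_m) : wt (- v) = wt v.
Proof. by rewrite !wtE; apply: eq_bigr => j _; rewrite mxE oppr_eq0. Qed.

Lemma wt_eq0 m (v : 'rV[F]_m) : (wt v == 0%N) = (v == 0).
Proof.
rewrite wtE sum_nat_eq0; apply/forallP/eqP => [v0 | -> j]; last by rewrite mxE eqxx.
by apply/rowP => j; rewrite mxE; apply/eqP; move: (v0 j); case: (v 0 j == 0).
Qed.

Lemma wt0 m : wt (0 : 'rV[F]_m) = 0%N.
Proof. by apply/eqP; rewrite wt_eq0. Qed.

Lemma wt_perm_mx m (s : 'S_m) (v : 'rV[F]_m) : wt (v *m perm_mx s) = wt v.
Proof.
rewrite -(invgK s) -col_permE /wt.
rewrite -(card_preimset [set j | v 0 j != 0] (@perm_inj _ s^-1)).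
by apply: eq_card => j; rewrite !inE mxE.
Qed.

End Weight.

Section Codes.
Variable F : finFieldType.

Lemma genCodeP k m (G : 'M[F]_(k, m)) c :
  reflect (exists u, c = u *m G) (c \in genCode G).
Proof. by apply: (iffP imsetP) => [[u _ ->] | [u ->]]; exists u. Qed.
Arguments genCodeP {k m G c}.

Lemma genCode_mul_unit k m (X : 'M[F]_k) (G : 'M[F]_(k, m)) :
  X \in unitmx -> genCode (X *m G) = genCode G.
Proof.
move=> Xu; apply/setP => c; apply/genCodeP/genCodeP => [[u ->] | [u ->]].
  by exists (u *m X); rewrite mulmxA.
by exists (u *m invmx X); rewrite mulmxA mulmxKV.
Qed.

Lemma genCode_mulmxr k m p (G : 'M[F]_(k, m)) (Q : 'M[F]_(m, p)) :
  genCode (G *m Q) = (fun c => c *m Q) @: genCode G.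
Proof.
apply/setP => c; apply/genCodeP/imsetP => [[u ->] | [x /genCodeP[u ->] ->]].
  by exists (u *m G); [apply/genCodeP; exists u | rewrite mulmxA].
by exists u; rewrite mulmxA.
Qed.

Lemma genCode_sysP k m (X : 'M[F]_(k, m)) (c : 'rV[F]_(m + k)) :
  reflect (lsubmx c = rsubmx c *m X) (c \in genCode (row_mx X 1%:M)).
Proof.
apply: (iffP genCodeP) => [[u ->] | cX].
  by rewrite mul_mx_row mulmx1 row_mxKl row_mxKr.
by exists (rsubmx c); rewrite mul_mx_row mulmx1 -cX hsubmxK.
Qed.

Lemma ipE_mx m (x y : 'rV[F]_m) : ipE x y = (x *m y^T) 0 0.
Proof. by rewrite /ipE mxE; apply: eq_bigr => j _; rewrite mxE. Qed.

Lemma dualCode_ipEP k m (G : 'M[F]_(k, m)) y :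
  reflect (G *m y^T = 0) (y \in dualCode (@ipE F m) (genCode G)).
Proof.
rewrite inE; apply: (iffP forallP) => [orth | Gy0 c].
  apply/colP => i.
  have iG : delta_mx 0 i *m G \in genCode G by apply/genCodeP; exists (delta_mx 0 i).
  move/implyP/(_ iG)/eqP: (orth (delta_mx 0 i *m G)).
  by rewrite ipE_mx -mulmxA -rowE !mxE.
by apply/implyP => /genCodeP[u ->]; rewrite ipE_mx -mulmxA Gy0 mulmx0 mxE.
Qed.

Lemma dualCode_sys k m (M : 'M[F]_(k, m)) :
  dualCode (@ipE F (k + m)) (genCode (row_mx 1%:M M)) =
  genCode (row_mx (- M^T) 1%:M).
Proof.
apply/setP => y; apply/dualCode_ipEP/genCode_sysP.
  rewrite -[y]hsubmxK tr_row_mx mul_row_col mul1mx row_mxKl row_mxKr.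
  move/eqP; rewrite addr_eq0 => /eqP/(congr1 trmx).
  by rewrite trmxK (linearN trmx) /= trmx_mul trmxK mulmxN.
move=> yl; rewrite -[y]hsubmxK tr_row_mx mul_row_col mul1mx yl.
by rewrite trmx_mul (linearN trmx) /= trmxK mulNmx addNr.
Qed.

Lemma sameWD_mulmxr m (C : {set 'rV[F]_m}) (Q : 'M[F]_m) :
  (forall x, wt (x *m Q) = wt x) -> sameWD C ((fun c => c *m Q) @: C).
Proof.
move=> wtQ w.
have Q_inj : injective (fun c : 'rV[F]_m => c *m Q).
  by move=> a b /eqP; rewrite -subr_eq0 -mulmxBl -wt_eq0 wtQ wt_eq0 subr_eq0 => /eqP.
rewrite -(card_imset _ Q_inj); apply: eq_card => c; rewrite [RHS]inE.
apply/imsetP/andP => [[x] | [/imsetP[x xC ->] cw]].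
  by rewrite inE => /andP[xC xw] ->; rewrite wtQ; split=> //; apply/imsetP; exists x.
by exists x; rewrite // inE xC -wtQ.
Qed.

Lemma fsd_sys k (M P : 'M[F]_k) :
  P *m P = 1%:M -> (forall x : 'rV_k, wt (x *m P) = wt x) -> M^T = P *m M *m P ->
  formallySelfDual (@ipE F (k + k)) (genCode (row_mx 1%:M M)).
Proof.
move=> PP wtP MT; pose Q := block_mx 0 P (- P) (0 : 'M[F]_k).
have wtQ x : wt (x *m Q) = wt x.
  rewrite -[x]hsubmxK mul_row_block !mulmx0 add0r addr0 !wt_row_mx.
  by rewrite mulmxN wtN !wtP addnC.
have GQ : P *m (row_mx 1%:M M *m Q) = row_mx (- (P *m M *m P)) 1%:M.
  rewrite mul_row_block !mulmx0 add0r addr0 mul1mx mulmxN mul_mx_row mulmxN.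
  by rewrite PP !mulmxA.
rewrite /formallySelfDual dualCode_sys MT -GQ genCode_mul_unit.
  by rewrite genCode_mulmxr; apply: sameWD_mulmxr.
exact: (mulmx1_unit PP).1.
Qed.

End Codes.

Lemma pchar_expr_inj (R : fieldType) p k :
  p \in [pchar R] -> injective (fun a : R => a ^+ (p ^ k)).
Proof.
move=> pR; elim: k => [|k IHk] a b /=; first by rewrite !expr1.
by rewrite expnSr !exprM => /(fmorph_inj (pFrobenius_aut pR))/IHk.
Qed.

Section Hermitian.
Variables (F : finFieldType) (r : nat).
Hypotheses (r_gt0 : (0 < r)%N) (r_inj : injective (fun a : F => a ^+ r)).

Let frob m : 'rV[F]_m -> 'rV[F]_m := map_mx (fun a => a ^+ r).

Lemma ipH_frob m (x y : 'rV[F]_m) : ipH r x y = ipE x (frob y).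
Proof. by apply: eq_bigr => j _; rewrite mxE. Qed.

Lemma wt_frob m (y : 'rV[F]_m) : wt (frob y) = wt y.
Proof. by rewrite !wtE; apply: eq_bigr => j _; rewrite mxE expf_eq0 r_gt0. Qed.

Lemma frob_inj m : injective (@frob m).
Proof.
move=> a b /matrixP ab; apply/matrixP => i j; apply: r_inj.
by have := ab i j; rewrite !mxE.
Qed.

Lemma fsd_ipH m (C : {set 'rV[F]_m}) :
  formallySelfDual (@ipE F m) C -> formallySelfDual (@ipH F r m) C.
Proof.
move=> fsdC w; rewrite fsdC -(card_preimset _ (@frob_inj m)).
apply: eq_card => y; rewrite !inE wt_frob; congr (_ && _).
by apply: eq_forallb => x; rewrite ipH_frob.
Qed.

End Hermitian.

Lemma perm_rev_ordV n : (perm (@rev_ord_inj n))^-1%g = perm (@rev_ord_inj n).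
Proof.
apply/permP => j; apply: (@perm_inj _ (perm (@rev_ord_inj n))).
by rewrite permKV !permE rev_ordK.
Qed.

Section Exchange.
Variables (R : comNzRingType) (n : nat).

Definition exchange_mx : 'M[R]_n := perm_mx (perm (@rev_ord_inj n)).

Lemma exchange_mxK : exchange_mx *m exchange_mx = 1%:M.
Proof. by rewrite -perm_mxM -{2}perm_rev_ordV mulgV perm_mx1. Qed.

Lemma trmx_exp_conj (J A : 'M[R]_n) k :
  J *m J = 1%:M -> A^T = J *m A *m J -> (A ^+ k)^T = J *m A ^+ k *m J.
Proof.
move=> JJ AT; elim: k => [|k IHk]; first by rewrite !expr0 trmx1 mulmx1 JJ.
rewrite exprSr -mulmxE trmx_mul IHk AT !mulmxA -(mulmxA _ J J) JJ mulmx1.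
by rewrite !mulmxE -(mulrA J A) -exprS -(mulrA J _ A) -exprSr.
Qed.

End Exchange.

Lemma toeplitz_trmx (F : finFieldType) n (A : 'M[F]_n) :
  toeplitz A -> A^T = exchange_mx F n *m A *m exchange_mx F n.
Proof.
move=> toepA; apply/matrixP => i j.
rewrite -row_permE -[X in _ *m perm_mx X]perm_rev_ordV -col_permE !mxE !permE.
by apply: toepA => /=; have := ltn_ord i; have := ltn_ord j; lia.
Qed.

Lemma trmx_polyMx_conj (F : finFieldType) n (J A : 'M[F]_n) (f : {poly F}) :
  J *m J = 1%:M -> A^T = J *m A *m J -> (polyMx f A)^T = J *m polyMx f A *m J.
Proof.
move=> JJ AT; rewrite /polyMx linear_sum mulmx_sumr mulmx_suml.
apply: eq_bigr => i _.
by rewrite linearZ /= (trmx_exp_conj _ JJ AT) -scalemxAr -scalemxAl.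
Qed.

Section DirectSum.
Variable F : finFieldType.

Lemma rank_sys k m (M : 'M[F]_(k, m)) : \rank (row_mx 1%:M M) = k.
Proof.
apply/eqP; rewrite eqn_leq rank_leq_row /=.
have := mxrankM_maxl (row_mx 1%:M M) (col_mx 1%:M 0).
by rewrite mul_row_col mulmx1 mulmx0 addr0 mxrank1.
Qed.

Lemma wt_sys_block k1 k2 m1 m2 (B1 : 'M[F]_(k1, m1)) (B2 : 'M[F]_(k2, m2)) u1 u2 :
  wt (row_mx u1 u2 *m row_mx 1%:M (block_mx B1 0 0 B2)) =
  (wt (u1 *m row_mx 1%:M B1) + wt (u2 *m row_mx 1%:M B2))%N.
Proof.
rewrite mul_mx_row mulmx1 mul_row_block !mulmx0 addr0 add0r.
by rewrite !mul_mx_row !mulmx1 !wt_row_mx addnACA.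
Qed.

Lemma minDist_wt_split k1 k2 m m1 m2 (G : 'M[F]_(k1 + k2, m))
    (G1 : 'M[F]_(k1, m1)) (G2 : 'M[F]_(k2, m2)) d1 d2 :
  (forall u1 u2, wt (row_mx u1 u2 *m G) = wt (u1 *m G1) + wt (u2 *m G2))%N ->
  minDist (genCode G1) d1 -> minDist (genCode G2) d2 ->
  minDist (genCode G) (minn d1 d2).
Proof.
move=> wtG [[_ /genCodeP[u1 ->] [nz1 wt1]] lb1] [[_ /genCodeP[u2 ->] [nz2 wt2]] lb2].
have inG k' m' (X : 'M[F]_(k', m')) u : u *m X \in genCode X.
  by apply/genCodeP; exists u.
have wt_l : wt (row_mx u1 0 *m G) = wt (u1 *m G1) by rewrite wtG mul0mx wt0 addn0.
have wt_r : wt (row_mx 0 u2 *m G) = wt (u2 *m G2) by rewrite wtG mul0mx wt0.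
split.
  rewrite /minn; case: ltnP => _.
    by exists (row_mx u1 0 *m G); rewrite ?inG // -wt_eq0 wt_l wt_eq0.
  by exists (row_mx 0 u2 *m G); rewrite ?inG // -wt_eq0 wt_r wt_eq0.
move=> _ /genCodeP[u ->]; rewrite -[u]hsubmxK -wt_eq0 wtG addn_eq0 negb_and.
case/orP; rewrite wt_eq0 => nz.
  exact: leq_trans (geq_minl _ _) (leq_trans (lb1 _ (inG _ _ _ _) nz) (leq_addr _ _)).
exact: leq_trans (geq_minr _ _) (leq_trans (lb2 _ (inG _ _ _ _) nz) (leq_addl _ _)).
Qed.

Lemma fsd_sys_block n (J B1 B2 : 'M[F]_n) :
  J *m J = 1%:M -> (forall x : 'rV_n, wt (x *m J) = wt x) ->
  B1^T = J *m B1 *m J -> B2^T = J *m B2 *m J ->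
  formallySelfDual (@ipE F (n + n + (n + n)))
    (genCode (row_mx 1%:M (block_mx B1 0 0 B2))).
Proof.
move=> JJ wtJ B1T B2T; apply: (fsd_sys (P := block_mx J 0 0 J)).
- by rewrite mulmx_block !mulmx0 !mul0mx !addr0 !add0r JJ -scalar_mx_block.
- by move=> x; rewrite -[x]hsubmxK mul_row_block !mulmx0 addr0 add0r !wt_row_mx !wtJ.
- by rewrite tr_block_mx !trmx0 B1T B2T !mulmx_block !(mulmx0, mul0mx, addr0, add0r).
Qed.

End DirectSum.

Theorem theorem4 (F : finFieldType) (n : nat) (hn : (1 <= n)%N)
  (f1 f2 : {poly F}) (A1 A2 : 'M[F]_n)
  (hA1 : toeplitz A1) (hA2 : toeplitz A2) (d1 d2 : nat)
  (hd1 : minDist (genCode (row_mx 1%:M (polyMx f1 A1))) d1)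
  (hd2 : minDist (genCode (row_mx 1%:M (polyMx f2 A2))) d2) :
  exists G : 'M[F]_(2 * n, 4 * n),
    [/\ \rank G = (2 * n)%N,
        minDist (genCode G) (minn d1 d2),
        formallySelfDual (@ipE F (4 * n)) (genCode G) &
        forall p h : nat, prime p -> #|F| = (p ^ h)%N -> ~~ odd h ->
          formallySelfDual (@ipH F (p ^ h./2) (4 * n)) (genCode G)].
Proof.
have -> : (2 * n = n + n)%N by lia.
have -> : (4 * n = n + n + (n + n))%N by lia.
have polyMxT f A : toeplitz A ->
    (polyMx f A)^T = exchange_mx F n *m polyMx f A *m exchange_mx F n.
  by move/toeplitz_trmx; apply: trmx_polyMx_conj (exchange_mxK F n).
have fsdE := fsd_sys_block (exchange_mxK F n) (@wt_perm_mx F n _)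
  (polyMxT f1 A1 hA1) (polyMxT f2 A2 hA2).
exists (row_mx 1%:M (block_mx (polyMx f1 A1) 0 0 (polyMx f2 A2))); split.
- exact: rank_sys.
- exact: minDist_wt_split (wt_sys_block _ _) hd1 hd2.
- exact: fsdE.
- move=> p h p_prime cardF _; apply: fsd_ipH fsdE.
    by rewrite expn_gt0 prime_gt0.
  exact/pchar_expr_inj/(card_finPcharP cardF p_prime).
Qed.
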